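(* In the model of the context, if the lead time is deterministic, $L_t=L$ for all $t$ with a constant integer $L\ge0$, then $$BM=\left(\frac{2L^2}{n^2}+\frac{2L}{n}\right)(1-\rho^n)+1 .$$
   Context: Model. Fix $\mu_D\in\mathbb{R}$, $\rho\in(-1,1)$, and an i.i.d. sequence $(\epsilon_t)_{t\in\mathbb{Z}}$ with $E\epsilon_t=0$, $\operatorname{Var}\epsilon_t=\sigma^2\in(0,\infty)$. The demand $(D_t)$ is the stationary AR(1) process $D_t=\mu_D+\rho(D_{t-1}-\mu_D)+\epsilon_t$. Fix an integer $L^+\ge 0$ and integers $n,m\ge1$. Lead times $(L_t)$ take values in $\{0,\dots,L^+\}$. Forecasts: $\widehat{D}_t=\frac1n\sum_{i=1}^n D_{t-i}$, $\widehat{L}_t=\frac1m\sum_{i=1}^m L_{t-i-L^+}$; order $q_t=\widehat{L}_t\widehat{D}_t-\widehat{L}_{t-1}\widehat{D}_{t-1}+D_{t-1}$; $BM=\operatorname{Var}q_t/\operatorname{Var}D_t$. *)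

From Stdlib Require Import Reals ZArith.
Open Scope R_scope.

(* An abstract probability expectation: a class of integrable random
   variables (functions Omega -> R) on which the expectation is a positive,
   normalised linear functional.  Any probability space (Int = L^1,
   Ex = integral) is an instance. *)
Record ExpSpace (Omega : Type) := {
  Int : (Omega -> R) -> Prop;
  Ex  : (Omega -> R) -> R;
  Int_const : forall c : R, Int (fun _ => c);
  Int_add : forall f g, Int f -> Int g -> Int (fun w => f w + g w);
  Int_scal : forall (c : R) f, Int f -> Int (fun w => c * f w);
  Ex_const : forall c : R, Ex (fun _ => c) = c;
  Ex_add : forall f g, Int f -> Int g -> Ex (fun w => f w + g w) = Ex f + Ex g;
  Ex_scal : forall (c : R) f, Int f -> Ex (fun w => c * f w) = c * Ex f;
  Ex_pos : forall f, Int f -> (forall w, 0 <= f w) -> 0 <= Ex f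
}.
Arguments Int {Omega} _ _.
Arguments Ex {Omega} _ _.

Definition Var {Omega} (P : ExpSpace Omega) (X : Omega -> R) : R :=
  Ex P (fun w => (X w - Ex P X) ^ 2).

Definition Cov {Omega} (P : ExpSpace Omega) (X Y : Omega -> R) : R :=
  Ex P (fun w => (X w - Ex P X) * (Y w - Ex P Y)).

Fixpoint rsum (f : nat -> R) (n : nat) : R :=
  match n with
  | O => 0
  | S k => rsum f k + f k
  end.

Definition Dhat {Omega} (n : nat) (D : Z -> Omega -> R) (t : Z) : Omega -> R :=
  fun w => / INR n * rsum (fun i => D (t - Z.of_nat (S i))%Z w) n.

Definition Lhat {Omega} (m Lplus : nat) (L : Z -> Omega -> R) (t : Z) : Omega -> R :=
  fun w => / INR m * rsum (fun i => L (t - Z.of_nat (S i) - Z.of_nat Lplus)%Z w) m.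

Definition order {Omega} (n m Lplus : nat) (D L : Z -> Omega -> R) (t : Z)
  : Omega -> R :=
  fun w => Lhat m Lplus L t w * Dhat n D t w
           - Lhat m Lplus L (t - 1)%Z w * Dhat n D (t - 1)%Z w
           + D (t - 1)%Z w.

Definition BM {Omega} (P : ExpSpace Omega) (n m Lplus : nat)
  (D L : Z -> Omega -> R) (t : Z) : R :=
  Var P (order n m Lplus D L t) / Var P (D t).

(* Since the lead time is constant, [Lhat] is constant and the order telescopes to
   q_t = (1 + L/n) D_{t-1} - (L/n) D_{t-1-n}, so Var q_t only involves Var D and the
   lag-n autocovariance rho^n Var D.  The latter needs the innovation eps_s to be
   uncorrelated with the past D_u (u < s): iterating the AR(1) recursion gives
   Cov(eps_s, D_u) = rho^k Cov(eps_s, D_{u-k}), whose right factor stays bounded by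
   stationarity, so the covariance vanishes. *)

From Stdlib Require Import Reals ZArith Lra Lia FunctionalExtensionality.
Open Scope R_scope.

Section Moments.

Context {Omega : Type} {P : ExpSpace Omega}.

Lemma Int_eq (f g : Omega -> R) : (forall w, f w = g w) -> Int P f -> Int P g.
Proof.
  intros Hfg Hf.
  replace g with f by (apply functional_extensionality; exact Hfg).
  exact Hf.
Qed.

Lemma Ex_eq (f g : Omega -> R) : (forall w, f w = g w) -> Ex P f = Ex P g.
Proof. intro Hfg. f_equal. apply functional_extensionality; exact Hfg. Qed.

Lemma Int_lin (a b : R) (f g : Omega -> R) :
  Int P f -> Int P g -> Int P (fun w => a * f w + b * g w).
Proof. intros Hf Hg. apply (Int_add _ P); apply (Int_scal _ P); assumption. Qed.

Lemma Ex_lin (a b : R) (f g : Omega -> R) :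
  Int P f -> Int P g -> Ex P (fun w => a * f w + b * g w) = a * Ex P f + b * Ex P g.
Proof.
  intros Hf Hg.
  rewrite (Ex_add _ P (fun w => a * f w) (fun w => b * g w))
    by (apply (Int_scal _ P); assumption).
  rewrite !(Ex_scal _ P) by assumption.
  reflexivity.
Qed.

Lemma Ex_affine (a b c : R) (f g : Omega -> R) :
  Int P f -> Int P g -> Ex P (fun w => a * f w + b * g w + c) = a * Ex P f + b * Ex P g + c.
Proof.
  intros Hf Hg.
  rewrite (Ex_add _ P (fun w => a * f w + b * g w) (fun _ => c)).
  - rewrite Ex_lin, (Ex_const _ P) by assumption. reflexivity.
  - apply Int_lin; assumption.
  - apply (Int_const _ P).
Qed.

Lemma Int_centered_mul (X Y : Omega -> R) (x y : R) :
  Int P X -> Int P Y -> Int P (fun w => X w * Y w) ->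
  Int P (fun w => (X w - x) * (Y w - y)).
Proof.
  intros HX HY HXY.
  apply Int_eq with
    (fun w => (1 * (X w * Y w) + (- y) * X w) + ((- x) * Y w + (x * y) * 1)).
  { intro w; ring. }
  apply (Int_add _ P); apply Int_lin; try assumption.
  apply (Int_const _ P).
Qed.

Lemma Cov_sym (X Y : Omega -> R) : Cov P X Y = Cov P Y X.
Proof. apply Ex_eq; intro w; ring. Qed.

Lemma Var_Cov (X : Omega -> R) : Var P X = Cov P X X.
Proof. apply Ex_eq; intro w; ring. Qed.

Lemma Cov_affine_l (a b c : R) (X Y Z : Omega -> R) :
  Int P X -> Int P Y -> Int P Z ->
  Int P (fun w => X w * Z w) -> Int P (fun w => Y w * Z w) ->
  Cov P (fun w => a * X w + b * Y w + c) Z = a * Cov P X Z + b * Cov P Y Z.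
Proof.
  intros HX HY HZ HXZ HYZ.
  unfold Cov at 1. rewrite Ex_affine by assumption.
  unfold Cov.
  rewrite <- (Ex_lin a b (fun w => (X w - Ex P X) * (Z w - Ex P Z))
                         (fun w => (Y w - Ex P Y) * (Z w - Ex P Z)))
    by (apply Int_centered_mul; assumption).
  apply Ex_eq; intro w; ring.
Qed.

Section TwoVariables.

Variables X Y : Omega -> R.
Hypotheses (HX : Int P X) (HY : Int P Y) (HXX : Int P (fun w => X w * X w))
  (HXY : Int P (fun w => X w * Y w)) (HYY : Int P (fun w => Y w * Y w)).

Let centered_comb (a b : R) (w : Omega) : R := a * (X w - Ex P X) + b * (Y w - Ex P Y).

Lemma Int_centered_comb_sq (a b : R) : Int P (fun w => centered_comb a b w ^ 2).
Proof.
  apply Int_eq with (fun w =>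
    1 * (a ^ 2 * ((X w - Ex P X) * (X w - Ex P X))
         + (2 * a * b) * ((X w - Ex P X) * (Y w - Ex P Y)))
    + b ^ 2 * ((Y w - Ex P Y) * (Y w - Ex P Y))).
  { intro w; unfold centered_comb; ring. }
  apply Int_lin; [apply Int_lin|]; apply Int_centered_mul; assumption.
Qed.

Lemma Ex_centered_comb_sq (a b : R) :
  Ex P (fun w => centered_comb a b w ^ 2)
  = a ^ 2 * Var P X + 2 * a * b * Cov P X Y + b ^ 2 * Var P Y.
Proof.
  rewrite !Var_Cov. unfold Cov.
  set (U := fun w => (X w - Ex P X) * (X w - Ex P X)).
  set (W := fun w => (X w - Ex P X) * (Y w - Ex P Y)).
  set (V := fun w => (Y w - Ex P Y) * (Y w - Ex P Y)).
  assert (HU : Int P U) by (apply Int_centered_mul; assumption).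
  assert (HW : Int P W) by (apply Int_centered_mul; assumption).
  assert (HV : Int P V) by (apply Int_centered_mul; assumption).
  transitivity (Ex P (fun w => 1 * (a ^ 2 * U w + 2 * a * b * W w) + b ^ 2 * V w)).
  { apply Ex_eq; intro w; unfold centered_comb, U, V, W; ring. }
  rewrite Ex_lin, Ex_lin by (try apply Int_lin; assumption).
  ring.
Qed.

Lemma Var_lin2 (a b c : R) :
  Var P (fun w => a * X w + b * Y w + c)
  = a ^ 2 * Var P X + 2 * a * b * Cov P X Y + b ^ 2 * Var P Y.
Proof.
  rewrite <- Ex_centered_comb_sq.
  unfold Var. rewrite Ex_affine by assumption.
  apply Ex_eq; intro w; unfold centered_comb; ring.
Qed.

Lemma Cov_bound : 2 * Rabs (Cov P X Y) <= Var P X + Var P Y.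
Proof.
  assert (Hsq : forall a b, 0 <= a ^ 2 * Var P X + 2 * a * b * Cov P X Y + b ^ 2 * Var P Y).
  { intros a b. rewrite <- Ex_centered_comb_sq.
    apply (Ex_pos _ P); [apply Int_centered_comb_sq | intro w; apply pow2_ge_0]. }
  pose proof (Hsq 1 1) as Hplus. pose proof (Hsq 1 (-1)) as Hminus.
  unfold Rabs; destruct Rcase_abs; lra.
Qed.

End TwoVariables.

End Moments.

Lemma geometric_bounded_eq0 (rho c M : R) (x : nat -> R) :
  Rabs rho < 1 -> (forall k, Rabs (x k) <= M) -> (forall k, c = rho ^ k * x k) -> c = 0.
Proof.
  intros Hrho Hx Hc.
  destruct (Req_dec c 0) as [|Hc0]; [assumption | exfalso].
  assert (HM : 0 <= M) by (pose proof (Hx 0%nat); pose proof (Rabs_pos (x 0%nat)); lra).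
  assert (Hcpos : 0 < Rabs c) by (apply Rabs_pos_lt; assumption).
  set (y := Rabs c / (M + 1)).
  assert (Hy : y * (M + 1) = Rabs c) by (unfold y; field; lra).
  destruct (pow_lt_1_zero rho Hrho y) as [N HN].
  { unfold y; apply Rdiv_lt_0_compat; lra. }
  specialize (HN N (le_n N)).
  assert (Habs : Rabs c = Rabs (rho ^ N) * Rabs (x N)) by (rewrite (Hc N); apply Rabs_mult).
  assert (Hle : Rabs (rho ^ N) * Rabs (x N) <= y * M).
  { apply Rmult_le_compat; try apply Rabs_pos; [lra | apply Hx]. }
  nra.
Qed.

Set Implicit Arguments.

Record stationary_AR1 {Omega : Type} (P : ExpSpace Omega) (muD rho sigma2 : R)
  (eps D : Z -> Omega -> R) : Prop := {
  ar1_rho_bound : -1 < rho < 1;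
  ar1_sigma2_pos : 0 < sigma2;
  ar1_Int_eps : forall s, Int P (eps s);
  ar1_Int_D : forall s, Int P (D s);
  ar1_Int_eps_eps : forall s u, Int P (fun w => eps s w * eps u w);
  ar1_Int_D_D : forall s u, Int P (fun w => D s w * D u w);
  ar1_Int_D_eps : forall s u, Int P (fun w => D s w * eps u w);
  ar1_Var_eps : forall s, Var P (eps s) = sigma2;
  ar1_Cov_eps : forall s u, s <> u -> Cov P (eps s) (eps u) = 0;
  ar1_recursion : forall t w, D t w = muD + rho * (D (t - 1)%Z w - muD) + eps t w;
  ar1_Cov_stationary : forall t h, Cov P (D (t + h)%Z) (D t) = Cov P (D h) (D 0%Z)
}.

Unset Implicit Arguments.

Section AR1.

Context {Omega : Type} {P : ExpSpace Omega} {muD rho sigma2 : R} {eps D : Z -> Omega -> R}.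
Hypothesis HM : stationary_AR1 P muD rho sigma2 eps D.

Let Int_eps := HM.(ar1_Int_eps).
Let Int_D := HM.(ar1_Int_D).
Let Int_eps_eps := HM.(ar1_Int_eps_eps).
Let Int_D_D := HM.(ar1_Int_D_D).
Let Int_D_eps := HM.(ar1_Int_D_eps).
Local Hint Resolve Int_eps Int_D Int_eps_eps Int_D_D Int_D_eps : core.

Let gamma0 := Var P (D 0%Z).

Lemma Int_eps_D (s u : Z) : Int P (fun w => eps s w * D u w).
Proof. apply Int_eq with (fun w => D u w * eps s w); auto. intro w; ring. Qed.

Local Hint Resolve Int_eps_D : core.

Lemma Var_D (u : Z) : Var P (D u) = gamma0.
Proof.
  unfold gamma0. rewrite !Var_Cov, <- (HM.(ar1_Cov_stationary) u 0%Z).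
  rewrite Z.add_0_r. reflexivity.
Qed.

Lemma D_affine (t : Z) :
  D t = (fun w => rho * D (t - 1)%Z w + 1 * eps t w + (muD - rho * muD)).
Proof.
  apply functional_extensionality; intro w.
  rewrite (HM.(ar1_recursion) t w) at 1. ring.
Qed.

Lemma Cov_eps_D_step (s u : Z) :
  Cov P (eps s) (D u) = rho * Cov P (eps s) (D (u - 1)%Z) + Cov P (eps s) (eps u).
Proof.
  rewrite Cov_sym, (D_affine u), Cov_affine_l by auto.
  rewrite !(Cov_sym (eps s)). ring.
Qed.

Lemma Cov_eps_D_iter (s u : Z) (k : nat) : (u < s)%Z ->
  Cov P (eps s) (D u) = rho ^ k * Cov P (eps s) (D (u - Z.of_nat k)%Z).
Proof.
  intro Hus. induction k as [|k IHk].
  - rewrite Z.sub_0_r. ring.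
  - rewrite IHk, (Cov_eps_D_step s (u - Z.of_nat k)%Z).
    rewrite HM.(ar1_Cov_eps) by lia.
    replace (u - Z.of_nat k - 1)%Z with (u - Z.of_nat (S k))%Z by lia.
    simpl. ring.
Qed.

Lemma Cov_eps_D_past (s u : Z) : (u < s)%Z -> Cov P (eps s) (D u) = 0.
Proof.
  intro Hus.
  apply (geometric_bounded_eq0 rho _ ((sigma2 + gamma0) / 2)
           (fun k => Cov P (eps s) (D (u - Z.of_nat k)%Z))).
  - destruct HM.(ar1_rho_bound). apply Rabs_def1; assumption.
  - intro k.
    assert (Hb : 2 * Rabs (Cov P (eps s) (D (u - Z.of_nat k)%Z))
                 <= Var P (eps s) + Var P (D (u - Z.of_nat k)%Z))
      by (apply Cov_bound; auto).
    rewrite HM.(ar1_Var_eps), Var_D in Hb. lra.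
  - intro k. apply Cov_eps_D_iter; assumption.
Qed.

Lemma autocov_D (u : Z) (k : nat) : Cov P (D (u + Z.of_nat k)%Z) (D u) = rho ^ k * gamma0.
Proof.
  induction k as [|k IHk].
  - rewrite Z.add_0_r, <- Var_Cov, Var_D. ring.
  - rewrite (D_affine (u + Z.of_nat (S k))%Z), Cov_affine_l by auto.
    rewrite (Cov_eps_D_past _ u) by lia.
    replace (u + Z.of_nat (S k) - 1)%Z with (u + Z.of_nat k)%Z by lia.
    rewrite IHk. simpl. ring.
Qed.

Lemma gamma0_pos : 0 < gamma0.
Proof.
  assert (Hfix : gamma0 = rho ^ 2 * gamma0 + sigma2).
  { rewrite <- (Var_D 0%Z) at 1. rewrite (D_affine 0%Z), Var_lin2 by auto.
    rewrite Var_D, HM.(ar1_Var_eps), Cov_sym, Cov_eps_D_past by lia.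
    ring. }
  destruct HM.(ar1_rho_bound).
  pose proof HM.(ar1_sigma2_pos).
  assert (Hcontr : 0 < 1 - rho ^ 2) by nra.
  destruct (Rle_lt_dec gamma0 0) as [Hle|]; [exfalso | assumption].
  assert (0 <= - gamma0 * (1 - rho ^ 2)) by (apply Rmult_le_pos; lra).
  lra.
Qed.

End AR1.

Lemma rsum_ext (f g : nat -> R) (n : nat) : (forall i, f i = g i) -> rsum f n = rsum g n.
Proof.
  intro Hfg. induction n as [|n IHn]; simpl; [reflexivity | rewrite IHn, Hfg; reflexivity].
Qed.

Lemma rsum_const (c : R) (n : nat) : rsum (fun _ => c) n = INR n * c.
Proof. induction n as [|n IHn]; simpl rsum; [simpl; ring | rewrite IHn, S_INR; ring]. Qed.

Lemma rsum_telescope (g : nat -> R) (n : nat) :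
  rsum (fun i => g (S i)) n - rsum (fun i => g (S (S i))) n = g 1%nat - g (S n).
Proof. induction n as [|n IHn]; simpl rsum; lra. Qed.

Lemma Lhat_const {Omega : Type} (m Lplus : nat) (L : Z -> Omega -> R) (c : R)
  (t : Z) (w : Omega) :
  (1 <= m)%nat -> (forall s v, L s v = c) -> Lhat m Lplus L t w = c.
Proof.
  intros Hm HL. unfold Lhat.
  rewrite (rsum_ext _ (fun _ => c)) by (intro; apply HL).
  rewrite rsum_const. field. apply not_0_INR; lia.
Qed.

(* No hypothesis on [n]: for [n = 0] both sides vanish, [/ INR 0] being [0]. *)
Lemma Dhat_diff {Omega : Type} (n : nat) (D : Z -> Omega -> R) (t : Z) (w : Omega) :
  Dhat n D t w - Dhat n D (t - 1)%Z w
  = / INR n * (D (t - 1)%Z w - D (t - Z.of_nat (S n))%Z w).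
Proof.
  unfold Dhat.
  rewrite (rsum_ext (fun i => D (t - 1 - Z.of_nat (S i))%Z w)
                    (fun i => D (t - Z.of_nat (S (S i)))%Z w)) by (intro i; f_equal; lia).
  rewrite <- Rmult_minus_distr_l.
  rewrite (rsum_telescope (fun i => D (t - Z.of_nat i)%Z w)).
  reflexivity.
Qed.

Lemma order_constant_lead_time {Omega : Type} (n m Lplus : nat) (D L : Z -> Omega -> R)
  (c : R) (t : Z) :
  (1 <= m)%nat -> (forall s w, L s w = c) ->
  order n m Lplus D L t
  = (fun w => (1 + c / INR n) * D (t - 1)%Z w
              + (- (c / INR n)) * D (t - Z.of_nat (S n))%Z w + 0).
Proof.
  intros Hm HL. apply functional_extensionality; intro w. unfold order.
  rewrite !(Lhat_const m Lplus L c) by assumption.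
  replace (c * Dhat n D t w - c * Dhat n D (t - 1)%Z w)
    with (c * (Dhat n D t w - Dhat n D (t - 1)%Z w)) by ring.
  rewrite Dhat_diff. unfold Rdiv. ring.
Qed.

Theorem mainTheorem5
  (Omega : Type) (P : ExpSpace Omega)
  (muD rho sigma2 : R) (Lplus n m Lc : nat)
  (eps D Lt : Z -> Omega -> R)
  (Hrho : -1 < rho < 1)
  (Hsigma : 0 < sigma2)
  (Hn : (1 <= n)%nat) (Hm : (1 <= m)%nat)
  (Heps_int : forall s, Int P (eps s))
  (HD_int : forall s, Int P (D s))
  (Heps2_int : forall s u, Int P (fun w => eps s w * eps u w))
  (HD2_int : forall s u, Int P (fun w => D s w * D u w))
  (HDeps_int : forall s u, Int P (fun w => D s w * eps u w))
  (Heps_mean : forall s, Ex P (eps s) = 0)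
  (Heps_var : forall s, Var P (eps s) = sigma2)
  (Heps_unc : forall s u, s <> u -> Cov P (eps s) (eps u) = 0)
  (HAR : forall t w, D t w = muD + rho * (D (t - 1)%Z w - muD) + eps t w)
  (Hstat_mean : forall t, Ex P (D t) = Ex P (D 0%Z))
  (Hstat_cov : forall t h, Cov P (D (t + h)%Z) (D t) = Cov P (D h) (D 0%Z))
  (HLc : (Lc <= Lplus)%nat)
  (HLt : forall t w, Lt t w = INR Lc) :
  forall t : Z,
    BM P n m Lplus D Lt t
    = (2 * INR Lc ^ 2 / INR n ^ 2 + 2 * INR Lc / INR n) * (1 - rho ^ n) + 1.
Proof.
  intro t.
  assert (HM : stationary_AR1 P muD rho sigma2 eps D) by (constructor; assumption).
  unfold BM. rewrite (order_constant_lead_time n m Lplus D Lt (INR Lc) t Hm HLt).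
  rewrite Var_lin2 by first [apply HM.(ar1_Int_D) | apply HM.(ar1_Int_D_D)].
  rewrite (Var_D HM t), (Var_D HM (t - 1)%Z), (Var_D HM (t - Z.of_nat (S n))%Z).
  replace (t - 1)%Z with (t - Z.of_nat (S n) + Z.of_nat n)%Z by lia.
  rewrite (autocov_D HM).
  pose proof (gamma0_pos HM).
  assert (INR n <> 0) by (apply not_0_INR; lia).
  field. split; [assumption | lra].
Qed.
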